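(* In the bandit setting of online Pandora's Box, competing with the non-adaptive benchmark, there is an online algorithm that is (i) $3.16$-approximate no-regret when one box must be selected; (ii) $12.64$-approximate no-regret when $k$ distinct boxes must be selected; (iii) $O(\log k)$-approximate no-regret when a basis of a given matroid of rank $k$ on the boxes must be selected.
   Context: Online Pandora's Box: there are $n$ boxes $\mathcal{B}=\{1,\dots,n\}$. An oblivious adversary fixes in advance, for each round $t=1,\dots,T$, a scenario $c(t)=(c^t_1,\dots,c^t_n)$ of nonnegative box values. In each round the algorithm, without knowing $c(t)$, opens boxes one at a time, observing each opened value, then selects among the opened boxes: a single box (cost $|P_t|+\min_{i\in P_t}c^t_i$, $P_t$ the set opened), or $k$ distinct opened boxes (cost $|P_t|$ plus sum of selected values), or an opened set forming a basis of a given matroid of rank $k$ on $\mathcal{B}$ (cost $|P_t|$ plus sum of selected values). Bandit setting: the algorithm only learns the values of the boxes it opened in each round. A non-adaptive strategy fixes a set $S\subseteq\mathcal{B}$ opened in every round and in each round makes the cheapest feasible selection among $S$; its round-$t$ cost is $|S|$ plus the value of that selection. The non-adaptive benchmark is $\mathrm{OPT}=\min_S\sum_{t=1}^T\mathrm{cost}_t(S)$. With $\mathcal{A}(t)$ the algorithm's round-$t$ cost, the algorithm is $\alpha$-approximate no-regret if $\frac1T\big(\mathbb{E}[\sum_t\mathcal{A}(t)]-\alpha\,\mathrm{OPT}\big)=o(1)$ as $T\to\infty$ (for fixed $n$). *)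

From HB Require Import structures.
From mathcomp Require Import all_boot all_order all_algebra.
From mathcomp Require Import reals.
Set Implicit Arguments. Unset Strict Implicit. Unset Printing Implicit Defensive.
Import Order.TTheory GRing.Theory Num.Theory.
Local Open Scope ring_scope.

(* Boxes are 'I_n.  A feasibility family [Fam : {set {set 'I_n}}] lists the
   admissible selections (singletons / k-subsets / matroid bases). *)

Section PB.
Variables (R : realType) (n : nat).

(* An action inside a round: open box i (inl i) or stop and select the opened
   set F (inr F). *)
Definition act := ('I_n + {set 'I_n})%type.

(* A history is the sequence of past actions together with what was observed:
   the value of the opened box for an [Open] action, and 0 (no information)
   for a [Select] action.  Bandit feedback: nothing else is revealed. *)
Definition history := seq (act * R).

(* A randomized online algorithm (behavioral strategy): given the history,
   a probability distribution over the next action. *)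
Definition strategy := history -> act -> R.

Definition step_open (P : {set 'I_n}) (e : act * R) : {set 'I_n} :=
  match e.1 with inl i => i |: P | inr _ => set0 end.

Definition opened (h : history) : {set 'I_n} := foldl step_open set0 h.

Definition rounds_done (h : history) : nat :=
  count (fun e : act * R => if e.1 is inr _ then true else false) h.

Definition legal (Fam : {set {set 'I_n}}) (h : history) (a : act) : bool :=
  match a with
  | inl i => i \notin opened h
  | inr F => (F \in Fam) && (F \subset opened h)
  end.

Definition valid_strategy (Fam : {set {set 'I_n}}) (s : strategy) : Prop :=
  forall h : history,
    (forall a, 0 <= s h a) /\ (\sum_(a : act) s h a = 1) /\
    (forall a, s h a != 0 -> legal Fam h a).

(* Expected cost of the algorithm against the (oblivious) scenario sequence
   c (round t uses scenario c t, t = 0 .. T-1), computed on the finite tree of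
   the interaction.  [fuel] bounds the number of remaining actions; each round
   uses at most n+1 actions, so fuel T*(n+1) suffices for valid strategies. *)
Fixpoint exp_cost (s : strategy) (c : nat -> {ffun 'I_n -> R}) (T : nat)
    (fuel : nat) (h : history) : R :=
  match fuel with
  | 0 => 0
  | f.+1 =>
    if (T <= rounds_done h)%N then 0 else
    let t := rounds_done h in
    \sum_(a : act) s h a *
      match a with
      | inl i => 1 + exp_cost s c T f (rcons h (a, c t i))
      | inr F => \sum_(i in F) c t i + exp_cost s c T f (rcons h (a, 0))
      end
  end.

Definition alg_cost (s : strategy) (c : nat -> {ffun 'I_n -> R}) (T : nat) : R :=
  exp_cost s c T (T * n.+1) [::].

(* The min is taken with neutral element
   sum_{i in S} c i, which (values being nonnegative) is >= every candidate,
   so this is the exact minimum whenever S contains a feasible set. *)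
Definition na_round_cost (Fam : {set {set 'I_n}}) (c : {ffun 'I_n -> R})
    (S : {set 'I_n}) : R :=
  #|S|%:R + \big[Num.min/(\sum_(i in S) c i)]_(F in Fam | F \subset S)
              (\sum_(i in F) c i).

Definition na_total (Fam : {set {set 'I_n}}) (c : nat -> {ffun 'I_n -> R})
    (T : nat) (S : {set 'I_n}) : R :=
  \sum_(t < T) na_round_cost Fam (c t) S.

(* OPT = min over sets S containing some feasible selection; the neutral
   element is the value at S = setT, itself a candidate when Fam is nonempty. *)
Definition OPT (Fam : {set {set 'I_n}}) (c : nat -> {ffun 'I_n -> R})
    (T : nat) : R :=
  \big[Num.min/na_total Fam c T setT]_(S : {set 'I_n} |
                                        [exists F in Fam, F \subset S])
     na_total Fam c T S.

Definition approx_no_regret (Fam : {set {set 'I_n}}) (B alpha : R)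
    (s : strategy) : Prop :=
  forall eps : R, 0 < eps -> exists T0 : nat, forall T : nat, (T0 <= T)%N ->
    forall c : nat -> {ffun 'I_n -> R},
      (forall t i, 0 <= c t i <= B) ->
      (alg_cost s c T - alpha * OPT Fam c T) / T%:R <= eps.

Definition single_fam : {set {set 'I_n}} := [set F : {set 'I_n} | #|F| == 1%N].
Definition ksub_fam (k : nat) : {set {set 'I_n}} := [set F : {set 'I_n} | #|F| == k].

Definition is_matroid (I : {set {set 'I_n}}) : Prop :=
  [/\ set0 \in I,
      (forall A B : {set 'I_n}, B \in I -> A \subset B -> A \in I) &
      (forall A B : {set 'I_n}, A \in I -> B \in I -> (#|A| < #|B|)%N ->
         exists2 x, x \in B :\: A & x |: A \in I)].

Definition is_basis (I : {set {set 'I_n}}) (B : {set 'I_n}) : bool :=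
  (B \in I) && [forall x, (x \notin B) ==> (x |: B \notin I)].

Definition bases (I : {set {set 'I_n}}) : {set {set 'I_n}} :=
  [set B : {set 'I_n} | is_basis I B].

Definition matroid_rank (I : {set {set 'I_n}}) (k : nat) : Prop :=
  (exists2 B, B \in I & #|B| = k) /\ (forall B, B \in I -> (#|B| <= k)%N).

End PB.

From HB Require Import structures.
From mathcomp Require Import all_boot all_order all_algebra.
From mathcomp Require Import reals sequences exp.
From mathcomp Require Import ring lra.
Set Implicit Arguments. Unset Strict Implicit. Unset Printing Implicit Defensive.
Import Order.TTheory GRing.Theory Num.Theory.
Local Open Scope ring_scope.

(* All three bounds follow from a single algorithm that is 3-approximate with
   constant additive regret for every family of nonempty feasible selections.
   It runs exponential weights over the sets S of boxes that contain a
   feasible selection, mixed with probability gamma = 1/M with the set of all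
   boxes, M bounding the cost of a round; it opens the sampled S and takes the
   cheapest feasible selection inside it.  The whole cost vector is seen only
   in rounds where every box is opened, and only those rounds update the loss
   estimates, with importance weight 1/p(all boxes).  Against any fixed S0
   with cost(S0) >= 1, the potential (2/eta) ln Phi + 2 L(S0) drops in
   expectation by at least E[cost] - 3 cost(S0): the exploration costs at most
   gamma M = 1 <= cost(S0), the unbiased estimates account for 2 cost(S0), and
   exp(-y) <= 1 - y/2 on [0, 1] pays for the exponential-weights loss.  Summing
   over the rounds gives cost <= 3 OPT + (2/eta) ln #|sets|.  When the empty
   set is feasible (a matroid of rank 0), selecting it at once costs 0. *)

Lemma expRN_le_1_half (R : realType) (y : R) : 0 <= y <= 1 -> expR (- y) <= 1 - y / 2.
Proof.
move=> /andP[y_ge0 y_le1].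
have y1_gt0 : 0 < 1 + y by lra.
rewrite expRN; apply: le_trans (_ : (1 + y)^-1 <= _).
  by rewrite lef_pV2 ?posrE ?expR_gt0 ?expR_ge1Dx.
rewrite -[X in X <= _]mul1r ler_pdivrMr //.
have : y * y <= y * 1 by rewrite ler_wpM2l.
nra.
Qed.

Lemma ln_le_subr1 (R : realType) (z : R) : 0 < z -> ln z <= z - 1.
Proof. by move=> z_gt0; have := @le_ln1Dx R (z - 1); rewrite addrCA subrr addr0; apply; lra. Qed.

Section PrefixMass.
Variables (V : nmodType) (n : nat).
Implicit Types (P S : {set 'I_n}) (i : 'I_n) (g : {set 'I_n} -> V).

Definition agree_upto P S (j : nat) : bool :=
  [forall i : 'I_n, (i < j)%N ==> ((i \in S) == (i \in P))].

Definition prefix_mass g P (j : nat) : V := \sum_(S | agree_upto P S j) g S.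

Definition frontier P : nat := \max_(i in P) i.+1.

Lemma agree_upto0 P S : agree_upto P S 0.
Proof. exact/forallP. Qed.

Lemma agree_upto_n P S : agree_upto P S n = (S == P).
Proof.
apply/forallP/eqP => [agreeSP|-> i]; last by rewrite eqxx implybT.
by apply/setP => i; have := agreeSP i; rewrite ltn_ord => /eqP.
Qed.

Lemma agree_uptoS P S (j : 'I_n) :
  agree_upto P S j.+1 = agree_upto P S j && ((j \in S) == (j \in P)).
Proof.
apply/forallP/andP => [agreeSP|[/forallP agreeSP jSP] i].
  split; last by have := agreeSP j; rewrite ltnSn.
  apply/forallP => i; apply/implyP => lt_ij; apply: (implyP (agreeSP i)).
  by rewrite ltnS ltnW.
apply/implyP; rewrite ltnS leq_eqVlt => /orP[/eqP/ord_inj -> //|lt_ij].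
exact: (implyP (agreeSP i)).
Qed.

Lemma agree_upto_setU1 P S (i : 'I_n) (j : nat) :
  (j <= i)%N -> agree_upto (i |: P) S j = agree_upto P S j.
Proof.
move=> le_ji; apply: eq_forallb => k; rewrite in_setU1.
case: (eqVneq k i) => [->|//]; by rewrite ltnNge le_ji.
Qed.

Lemma frontier_gt P i : i \in P -> (i < frontier P)%N.
Proof. by move=> iP; rewrite /frontier (bigD1 i) //= leq_max leqnn. Qed.

Lemma notin_frontier P i : (frontier P <= i)%N -> i \notin P.
Proof. by move=> le_fi; apply/negP => /frontier_gt; rewrite ltnNge le_fi. Qed.

Lemma frontier_le P : (frontier P <= n)%N.
Proof. by rewrite /frontier; apply/bigmax_leqP => i _; exact: ltn_ord. Qed.

Lemma frontier_set0 : frontier set0 = 0%N.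
Proof. by rewrite /frontier big_pred0 // => i; rewrite inE. Qed.

Lemma frontier_setU1 P i : (frontier P <= i)%N -> frontier (i |: P) = i.+1.
Proof.
move=> le_fi; apply/eqP; rewrite eqn_leq frontier_gt ?setU11 // andbT.
apply/bigmax_leqP => k; rewrite in_setU1 => /orP[/eqP -> //|kP].
exact: leq_trans (frontier_gt kP) (leq_trans le_fi (leqnSn i)).
Qed.

Lemma agree_upto_frontier P S : agree_upto P S (frontier P) -> P \subset S.
Proof.
move=> /forallP agreeSP; apply/subsetP => i iP.
by have := agreeSP i; rewrite frontier_gt //= iP => /eqP ->.
Qed.

Lemma prefix_mass0 g P : prefix_mass g P 0 = \sum_S g S.
Proof. by rewrite /prefix_mass (eq_bigl xpredT) // => S; exact: agree_upto0. Qed.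

Lemma prefix_mass_n g P : prefix_mass g P n = g P.
Proof.
by rewrite /prefix_mass (eq_bigl (fun S => S == P)) ?big_pred1_eq // => S; exact: agree_upto_n.
Qed.

Lemma prefix_massS g P (j : 'I_n) : j \notin P ->
  prefix_mass g P j = prefix_mass g (j |: P) j.+1 + prefix_mass g P j.+1.
Proof.
move=> jP; rewrite /prefix_mass (bigID (fun S => j \in S)) /=.
congr (_ + _); apply: eq_bigl => S; rewrite agree_uptoS.
  by rewrite agree_upto_setU1 // setU11 eqb_id.
by rewrite (negbTE jP) eqbF_neg.
Qed.

(* A set drawn from g can be revealed box by box in increasing order: the mass
   of the sets extending P splits according to their next box i, or stops at P. *)
Lemma prefix_mass_unfold g P (j : nat) : (frontier P <= j <= n)%N ->
  prefix_mass g P j =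
  \sum_(i : 'I_n | (j <= i)%N) prefix_mass g (i |: P) i.+1 + prefix_mass g P n.
Proof.
move=> /andP[]; move: {2}(n - j)%N (erefl (n - j)%N) => k.
elim: k j => [|k IH] j nj_k le_fj le_jn.
  have -> : j = n by apply/eqP; rewrite eqn_leq le_jn -subn_eq0 nj_k.
  by rewrite big_pred0 ?add0r // => i; rewrite leqNgt ltn_ord.
have lt_jn : (j < n)%N by rewrite -subn_gt0 nj_k.
pose j' := Ordinal lt_jn.
have -> : prefix_mass g P j = prefix_mass g P j' by [].
rewrite prefix_massS ?notin_frontier // (IH j.+1) ?subnS ?nj_k ?(leq_trans le_fj) //.
rewrite addrA [in RHS](bigD1 j') //=; congr (_ + _ + _).
by apply: eq_bigl => i; rewrite ltn_neqAle andbC -(inj_eq val_inj) eq_sym.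
Qed.

End PrefixMass.

Section Selection.
Variables (R : realType) (n : nat) (Fam : {set {set 'I_n}}).
Implicit Types (P S F G : {set 'I_n}) (c : {ffun 'I_n -> R}).

Definition feasible_in P F : bool := (F \in Fam) && (F \subset P).

Definition best_feasible P c : {set 'I_n} :=
  if [pick F | feasible_in P F] is Some F0 then
    [arg min_(F < F0 | feasible_in P F) \sum_(i in F) c i]%O
  else set0.

Lemma best_feasibleP P c : (exists F, feasible_in P F) ->
  feasible_in P (best_feasible P c) /\
  forall G, feasible_in P G -> \sum_(i in best_feasible P c) c i <= \sum_(i in G) c i.
Proof.
move=> [F feasF]; rewrite /best_feasible; case: pickP => [F0 feasF0|none].
  by case: arg_minP => // G feasG G_min; split.
by have := none F; rewrite feasF.
Qed.

Definition select_cost c S : R :=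
  \big[Num.min/(\sum_(i in S) c i)]_(F in Fam | F \subset S) (\sum_(i in F) c i).

Lemma na_round_costE c S : na_round_cost Fam c S = #|S|%:R + select_cost c S.
Proof. by []. Qed.

Lemma ler_sum_subset c F S : (forall i, 0 <= c i) -> F \subset S ->
  \sum_(i in F) c i <= \sum_(i in S) c i.
Proof.
move=> c_ge0 FS; rewrite [X in _ <= X](bigID (mem F)) /=.
rewrite [X in _ <= X + _](eq_bigl (mem F)); last first.
  by move=> i /=; rewrite andb_idl //; apply: (subsetP FS).
by rewrite lerDl sumr_ge0.
Qed.

Lemma select_cost_ge0 c S : (forall i, 0 <= c i) -> 0 <= select_cost c S.
Proof.
move=> c_ge0; have sum_ge0 A : 0 <= \sum_(i in A) c i by apply: sumr_ge0 => i _.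
apply: (big_ind (fun x => 0 <= x)) => [|x y x_ge0 y_ge0|F _]; rewrite ?sum_ge0 //.
by rewrite le_min x_ge0 y_ge0.
Qed.

Lemma select_cost_le_sum c S : select_cost c S <= \sum_(i in S) c i.
Proof.
apply: (big_rec (fun x => x <= \sum_(i in S) c i)) => // F y _ le_y.
by rewrite ge_min le_y orbT.
Qed.

Lemma sum_le_select_cost c S F : (forall i, 0 <= c i) -> feasible_in S F ->
  (forall G, feasible_in S G -> \sum_(i in F) c i <= \sum_(i in G) c i) ->
  \sum_(i in F) c i <= select_cost c S.
Proof.
move=> c_ge0 /andP[FFam FS] F_min; apply: (big_ind (fun x => \sum_(i in F) c i <= x)).
- exact: ler_sum_subset.
- by move=> x y Fx Fy; rewrite le_min Fx Fy.
- by move=> G GS; apply: F_min.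
Qed.

Lemma na_round_cost_ge0 c S : (forall i, 0 <= c i) -> 0 <= na_round_cost Fam c S.
Proof. by move=> c_ge0; rewrite addr_ge0 ?select_cost_ge0. Qed.

Lemma OPT_ge0 (c : nat -> {ffun 'I_n -> R}) T : (forall t i, 0 <= c t i) ->
  0 <= OPT Fam c T.
Proof.
have na_total_ge0 S : (forall t i, 0 <= c t i) -> 0 <= na_total Fam c T S.
  by move=> c_ge0; apply: sumr_ge0 => t _; exact: na_round_cost_ge0.
move=> c_ge0; apply: (big_ind (fun x => 0 <= x)) => [|x y x_ge0 y_ge0|S _].
- exact: na_total_ge0.
- by rewrite le_min x_ge0 y_ge0.
- exact: na_total_ge0.
Qed.

End Selection.

Section ExpWeights.
Variables (R : realType) (n : nat) (Fam : {set {set 'I_n}}) (M : R).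
Implicit Types (P S : {set 'I_n}) (L : {ffun {set 'I_n} -> R}).

Definition admissible : {set {set 'I_n}} := [set S : {set 'I_n} | [exists F in Fam, F \subset S]].

Definition explore_rate : R := M^-1.

Definition learn_rate : R := (2 * M ^+ 2)^-1.

Definition weight L S : R :=
  if S \in admissible then expR (- (learn_rate * L S)) else 0.

Definition weight_sum L : R := \sum_S weight L S.

Definition weight_prob L S : R := weight L S / weight_sum L.

Definition play_prob L S : R :=
  (1 - explore_rate) * weight_prob L S + explore_rate * (S == setT)%:R.

(* The cost vector is known exactly when every box was opened, which happens
   with probability play_prob L setT; dividing by it makes the estimates unbiased. *)
Definition full_update L (c : {ffun 'I_n -> R}) : {ffun {set 'I_n} -> R} :=
  [ffun S => L S + na_round_cost Fam c S / play_prob L setT].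

Definition update L P (c : {ffun 'I_n -> R}) : {ffun {set 'I_n} -> R} :=
  if P == setT then full_update L c else L.

Hypothesis M_ge1 : 1 <= M.
Hypothesis Fam_nonempty : exists F, F \in Fam.

Lemma M_gt0 : 0 < M.
Proof. exact: lt_le_trans ltr01 M_ge1. Qed.

Lemma explore_rate_gt0 : 0 < explore_rate.
Proof. by rewrite invr_gt0 M_gt0. Qed.

Lemma explore_rate_le1 : explore_rate <= 1.
Proof. by rewrite invf_le1 // M_gt0. Qed.

Lemma learn_rate_gt0 : 0 < learn_rate.
Proof. by rewrite invr_gt0 mulr_gt0 // exprn_gt0 // M_gt0. Qed.

Lemma setT_admissible : setT \in admissible.
Proof.
by case: Fam_nonempty => F FFam; rewrite inE; apply/existsP; exists F; rewrite FFam subsetT.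
Qed.

Lemma weight_ge0 L S : 0 <= weight L S.
Proof. by rewrite /weight; case: ifP => _ //; exact: expR_ge0. Qed.

Lemma weight_le_sum L S : weight L S <= weight_sum L.
Proof. by rewrite /weight_sum (bigD1 S) //= lerDl sumr_ge0 // => *; exact: weight_ge0. Qed.

Lemma weight_sum_gt0 L : 0 < weight_sum L.
Proof. by apply: lt_le_trans (weight_le_sum L setT); rewrite /weight setT_admissible expR_gt0. Qed.

Lemma weight_prob_ge0 L S : 0 <= weight_prob L S.
Proof. by rewrite divr_ge0 ?weight_ge0 // ltW // weight_sum_gt0. Qed.

Lemma sum_weight_prob L : \sum_S weight_prob L S = 1.
Proof. by rewrite -mulr_suml divff // gt_eqF // weight_sum_gt0. Qed.

Lemma play_prob_ge0 L S : 0 <= play_prob L S.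
Proof.
have gam_le1 := explore_rate_le1; have gam_gt0 := explore_rate_gt0.
rewrite /play_prob addr_ge0 // mulr_ge0 ?weight_prob_ge0 ?ler0n //; lra.
Qed.

Lemma sum_play_prob L : \sum_S play_prob L S = 1.
Proof.
rewrite /play_prob big_split /= -!mulr_sumr sum_weight_prob (bigD1 setT) //= eqxx big1.
  by rewrite addr0 !mulr1 subrK.
by move=> S /negbTE ->.
Qed.

Lemma explore_rate_le_play_probT L : explore_rate <= play_prob L setT.
Proof.
have := explore_rate_le1; have := explore_rate_gt0; have := weight_prob_ge0 L setT.
rewrite /play_prob eqxx mulr1; nra.
Qed.

Lemma play_prob_admissible L S : play_prob L S != 0 -> S \in admissible.
Proof.
apply: contraR => SnA; have ST : (S == setT) = false.
  by apply: contraNF SnA => /eqP ->; exact: setT_admissible.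
by rewrite /play_prob /weight_prob /weight (negbTE SnA) ST mul0r !mulr0 addr0.
Qed.

Lemma admissible_feasible S : S \in admissible -> exists F, feasible_in Fam S F.
Proof. by rewrite inE => /existsP[F FS]; exists F. Qed.

Section PotentialStep.
Variables (c : {ffun 'I_n -> R}) (S0 : {set 'I_n}).
Hypothesis cost_ge0 : forall S, 0 <= na_round_cost Fam c S.
Hypothesis cost_leM : forall S, na_round_cost Fam c S <= M.
Hypothesis S0_admissible : S0 \in admissible.
Hypothesis cost_S0_ge1 : 1 <= na_round_cost Fam c S0.

Local Notation cost := (na_round_cost Fam c).

Definition potential L : R := 2 / learn_rate * ln (weight_sum L) + 2 * L S0.

Lemma potential_ge0 L : 0 <= potential L.
Proof.
have eta_gt0 := learn_rate_gt0.
have ln_ge : - (learn_rate * L S0) <= ln (weight_sum L).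
  rewrite -[X in X <= _]expRK ler_ln ?posrE ?expR_gt0 ?weight_sum_gt0 //.
  by have := weight_le_sum L S0; rewrite /weight S0_admissible.
have : 2 / learn_rate * - (learn_rate * L S0) <= 2 / learn_rate * ln (weight_sum L).
  by rewrite ler_pM2l ?divr_gt0.
have -> : 2 / learn_rate * - (learn_rate * L S0) = - (2 * L S0) by field; rewrite gt_eqF.
rewrite /potential; lra.
Qed.

Lemma expected_cost_le L :
  \sum_S play_prob L S * cost S <= \sum_S weight_prob L S * cost S + 1.
Proof.
set A := \sum_S weight_prob L S * cost S.
have A_ge0 : 0 <= A by rewrite sumr_ge0 // => S _; rewrite mulr_ge0 ?weight_prob_ge0.
have -> : \sum_S play_prob L S * cost S =
          (1 - explore_rate) * A + explore_rate * cost setT.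
  rewrite (eq_bigr (fun S => (1 - explore_rate) * (weight_prob L S * cost S) +
                             explore_rate * ((S == setT)%:R * cost S))); last first.
    by move=> S _; rewrite /play_prob; ring.
  rewrite big_split /= -!mulr_sumr -/A (bigD1 setT) //= eqxx mul1r big1 ?addr0 //.
  by move=> S /negbTE ->; rewrite mul0r.
have explore_le1 : explore_rate * cost setT <= 1.
  by rewrite /explore_rate mulrC ler_pdivrMr ?mul1r ?M_gt0.
have := explore_rate_gt0; nra.
Qed.

Lemma weight_full_update L S :
  weight (full_update L c) S <=
  weight L S * (1 - learn_rate * (cost S / play_prob L setT) / 2).
Proof.
have pT_gt0 := lt_le_trans explore_rate_gt0 (explore_rate_le_play_probT L).
have M_neq0 : M != 0 by rewrite gt_eqF ?M_gt0.
have cost_div_le : cost S / play_prob L setT <= M * M.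
  apply: le_trans (_ : M / play_prob L setT <= _); first by rewrite ler_pM2r ?invr_gt0.
  have -> : M * M = M / explore_rate by rewrite /explore_rate invrK.
  by rewrite ler_pM2l ?M_gt0 // lef_pV2 ?posrE ?explore_rate_gt0 ?explore_rate_le_play_probT.
have y_le1 : learn_rate * (cost S / play_prob L setT) <= 1.
  have : learn_rate * (cost S / play_prob L setT) <= learn_rate * (M * M).
    by rewrite ler_pM2l ?learn_rate_gt0.
  have -> : learn_rate * (M * M) = 1 / 2 by rewrite /learn_rate; field.
  lra.
rewrite /weight ffunE; case: ifP => _; last by rewrite mul0r.
rewrite mulrDr opprD expRD; apply: ler_wpM2l; first exact: expR_ge0.
apply: expRN_le_1_half; rewrite y_le1 andbT.
by rewrite mulr_ge0 ?divr_ge0 ?cost_ge0 ?ltW ?learn_rate_gt0.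
Qed.

Lemma weight_sum_full_update L :
  weight_sum (full_update L c) <=
  weight_sum L * (1 - learn_rate / 2 * ((\sum_S weight_prob L S * cost S) / play_prob L setT)).
Proof.
apply: (@le_trans _ _ (\sum_S weight L S * (1 - learn_rate * (cost S / play_prob L setT) / 2))).
  by apply: ler_sum => S _; exact: weight_full_update.
set pT := play_prob L setT; set Phi := weight_sum L.
have Phi_neq0 : Phi != 0 by rewrite gt_eqF ?weight_sum_gt0.
have pT_neq0 : pT != 0.
  by rewrite gt_eqF // (lt_le_trans explore_rate_gt0) ?explore_rate_le_play_probT.
have -> : \sum_S weight L S * (1 - learn_rate * (cost S / pT) / 2) =
          Phi - learn_rate / 2 / pT * \sum_S weight L S * cost S.
  by rewrite /Phi /weight_sum mulr_sumr -sumrB; apply: eq_bigr => S _; ring.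
have -> : \sum_S weight_prob L S * cost S = (\sum_S weight L S * cost S) / Phi.
  by rewrite mulr_suml; apply: eq_bigr => S _; rewrite /weight_prob -/Phi; ring.
by rewrite le_eqVlt; apply/orP; left; apply/eqP; field; apply/andP.
Qed.

Lemma potential_full_update L :
  play_prob L setT * (potential (full_update L c) - potential L) <=
  2 * cost S0 - \sum_S weight_prob L S * cost S.
Proof.
set pT := play_prob L setT; set A := \sum_S weight_prob L S * cost S.
set Phi := weight_sum L; set Phi' := weight_sum (full_update L c).
have pT_gt0 : 0 < pT := lt_le_trans explore_rate_gt0 (explore_rate_le_play_probT L).
have eta_gt0 := learn_rate_gt0.
have pT_neq0 : pT != 0 by rewrite gt_eqF.
have eta_neq0 : learn_rate != 0 by rewrite gt_eqF.
have Phi_gt0 : 0 < Phi := weight_sum_gt0 L.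
have Phi'_gt0 : 0 < Phi' := weight_sum_gt0 _.
have ln_drop : ln Phi' - ln Phi <= - (learn_rate / 2 * (A / pT)).
  rewrite -ln_div ?posrE //; apply: le_trans (ln_le_subr1 (divr_gt0 Phi'_gt0 Phi_gt0)) _.
  have : Phi' / Phi <= 1 - learn_rate / 2 * (A / pT).
    by rewrite ler_pdivrMr // mulrC; exact: weight_sum_full_update.
  lra.
have -> : pT * (potential (full_update L c) - potential L) =
          pT * (2 / learn_rate) * (ln Phi' - ln Phi) + 2 * cost S0.
  by rewrite /potential -/Phi -/Phi' /full_update ffunE -/pT; field; rewrite ?pT_neq0 ?eta_neq0.
have coef_gt0 : 0 < pT * (2 / learn_rate) by rewrite mulr_gt0 // divr_gt0.
have : pT * (2 / learn_rate) * (ln Phi' - ln Phi) <=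
       pT * (2 / learn_rate) * - (learn_rate / 2 * (A / pT)).
  by rewrite ler_pM2l.
have -> : pT * (2 / learn_rate) * - (learn_rate / 2 * (A / pT)) = - A.
  by field; rewrite ?pT_neq0 ?eta_neq0.
lra.
Qed.

Lemma potential_step L :
  \sum_S play_prob L S * (cost S + potential (update L S c)) <=
  3 * cost S0 + potential L.
Proof.
have -> : \sum_S play_prob L S * (cost S + potential (update L S c)) =
    \sum_S play_prob L S * cost S + potential L +
    play_prob L setT * (potential (full_update L c) - potential L).
  rewrite (eq_bigr (fun S => play_prob L S * cost S + play_prob L S * potential (update L S c)));
    last by move=> *; rewrite mulrDr.
  rewrite big_split /= -addrA; congr (_ + _).
  rewrite (bigD1 setT) //= /update eqxx (eq_bigr (fun S => play_prob L S * potential L));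
    last by move=> S /negbTE ->.
  rewrite -mulr_suml (_ : \sum_(S | S != setT) play_prob L S = 1 - play_prob L setT).
    by ring.
  by rewrite -(sum_play_prob L) [in RHS](bigD1 setT) //= addrC addrK.
move: (expected_cost_le L) (potential_full_update L) cost_S0_ge1.
set A := \sum_S weight_prob L S * cost S; set E := \sum_S play_prob L S * cost S.
set D := play_prob L setT * _; lra.
Qed.

End PotentialStep.

Record state := State {
  est_loss : {ffun {set 'I_n} -> R};
  seen : {ffun 'I_n -> R};
  round_opened : {set 'I_n} }.

Definition state_step (x : state) (e : act n * R) : state :=
  match e.1 with
  | inl i =>
    State (est_loss x) [ffun k => if k == i then e.2 else seen x k] (i |: round_opened x)
  | inr _ => State (update (est_loss x) (round_opened x) (seen x)) (seen x) set0
  end.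

Definition state_of (h : history R n) : state := foldl state_step (State 0 0 set0) h.

Definition fallback_act P (cv : {ffun 'I_n -> R}) : act n :=
  if [exists F, feasible_in Fam P F] then inr (best_feasible Fam P cv)
  else if [pick i | i \notin P] is Some i then inl i else inr set0.

(* The set to open is drawn from play_prob, revealed box by box as in
   prefix_mass_unfold; the fallback only matters off the support. *)
Definition exp_weights_strategy : strategy R n := fun h a =>
  let L := est_loss (state_of h) in let cv := seen (state_of h) in
  let P := opened h in let m := prefix_mass (play_prob L) P (frontier P) in
  if 0 < m then
    match a with
    | inl i => if (frontier P <= i)%N then prefix_mass (play_prob L) (i |: P) i.+1 / m else 0
    | inr F => if F == best_feasible Fam P cv then play_prob L P / m else 0
    end
  else (a == fallback_act P cv)%:R.

Lemma state_of_rcons h e : state_of (rcons h e) = state_step (state_of h) e.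
Proof. by rewrite /state_of foldl_rcons. Qed.

Lemma opened_rcons (h : history R n) e : opened (rcons h e) = step_open (opened h) e.
Proof. by rewrite /opened foldl_rcons. Qed.

Lemma round_opened_state h : round_opened (state_of h) = opened h.
Proof.
elim/last_ind: h => [//|h e IH].
by rewrite state_of_rcons opened_rcons /state_step /step_open; case: e.1 => //= i; rewrite IH.
Qed.

Lemma rounds_done_rcons (h : history R n) e :
  rounds_done (rcons h e) = (rounds_done h + (if e.1 is inr _ then 1 else 0))%N.
Proof. by rewrite /rounds_done -cats1 count_cat /=; case: e.1 => _ /=; rewrite addn0. Qed.

Lemma prefix_mass_ge0 L P j : 0 <= prefix_mass (play_prob L) P j.
Proof. by apply: sumr_ge0 => S _; exact: play_prob_ge0. Qed.

Lemma fallback_act_legal (h : history R n) cv : legal Fam h (fallback_act (opened h) cv).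
Proof.
rewrite /fallback_act; case: ifP => [/existsP feas|infeas].
  by have [] := best_feasibleP cv feas.
case: pickP => [i iP //|none]; case: Fam_nonempty => F FFam.
have openedT : opened h = setT.
  by apply/setP => i; rewrite inE; have := none i; rewrite /= => /negbFE.
suff : [exists F, feasible_in Fam (opened h) F] by rewrite infeas.
by apply/existsP; exists F; rewrite /feasible_in FFam openedT subsetT.
Qed.

Lemma exp_weights_strategy_valid : valid_strategy Fam exp_weights_strategy.
Proof.
move=> h; rewrite /exp_weights_strategy.
set L := est_loss _; set cv := seen _; set P := opened h; set m := prefix_mass _ P _.
have [m_gt0|_] := ltrP 0 m; last first.
  split; first by move=> a; rewrite ler0n.
  split; first by rewrite (bigD1 (fallback_act P cv)) //= eqxx big1 ?addr0 // => a /negbTE ->.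
  by move=> a; rewrite pnatr_eq0 eqb0 negbK => /eqP ->; exact: fallback_act_legal.
split.
  by move=> [i|F] /=; case: ifP => // _;
    rewrite divr_ge0 ?prefix_mass_ge0 ?play_prob_ge0 ?ltW.
split.
  rewrite big_sumType /= -big_mkcond /= -big_mkcond /= big_pred1_eq -mulr_suml -mulrDl.
  rewrite -[play_prob L P](prefix_mass_n (play_prob L) P) -prefix_mass_unfold.
    by rewrite divff ?gt_eqF.
  by rewrite leqnn frontier_le.
move=> [i|F] /=; first by case: ifP => [le_fi _|_]; [exact: notin_frontier | rewrite eqxx].
case: ifP => [/eqP -> prob_neq0|_]; last by rewrite eqxx.
have : play_prob L P != 0 by apply: contraNneq prob_neq0 => ->; rewrite mul0r.
by move=> /play_prob_admissible /admissible_feasible /(best_feasibleP cv) [].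
Qed.

Section Analysis.
Variables (c : nat -> {ffun 'I_n -> R}) (T : nat) (S0 : {set 'I_n}).
Hypothesis c_ge0 : forall t i, 0 <= c t i.
Hypothesis cost_leM : forall t S, na_round_cost Fam (c t) S <= M.
Hypothesis S0_admissible : S0 \in admissible.
Hypothesis cost_S0_ge1 : forall t, 1 <= na_round_cost Fam (c t) S0.

Local Notation strat := exp_weights_strategy.

Definition cost_bound (t : nat) L : R :=
  3 * \sum_(t <= tau < T) na_round_cost Fam (c tau) S0 + potential S0 L.

(* Bound on the remaining cost when S is the set being opened and P is opened
   so far: the |S| - |P| further openings, the selection, then later rounds. *)
Definition branch_bound (t : nat) L P S : R :=
  play_prob L S *
    ((#|S|%:R - #|P|%:R) + select_cost Fam (c t) S + cost_bound t.+1 (update L S (c t))).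

Definition history_bound (h : history R n) : R :=
  prefix_mass (branch_bound (rounds_done h) (est_loss (state_of h)) (opened h))
    (opened h) (frontier (opened h)).

Definition seen_correct (h : history R n) : Prop :=
  forall i, i \in opened h -> seen (state_of h) i = c (rounds_done h) i.

(* The expected cost still to pay, weighted by the probability that the set
   sampled at the start of the round is consistent with the boxes opened so far. *)
Definition cost_to_go_le (f : nat) : Prop :=
  forall h, seen_correct h -> (rounds_done h < T)%N ->
  prefix_mass (play_prob (est_loss (state_of h))) (opened h) (frontier (opened h)) *
    exp_cost strat c T f h <= history_bound h.

Lemma exp_cost_done f h : (T <= rounds_done h)%N -> exp_cost strat c T f h = 0.
Proof. by case: f => //= f ->. Qed.

Lemma cost_bound_ge0 t L : 0 <= cost_bound t L.
Proof.
apply: addr_ge0; last exact: potential_ge0.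
by rewrite mulr_ge0 // sumr_ge0 // => tau _; exact: na_round_cost_ge0.
Qed.

Lemma history_bound_ge0 h : 0 <= history_bound h.
Proof.
rewrite /history_bound /prefix_mass; apply: sumr_ge0 => S /agree_upto_frontier PS.
rewrite /branch_bound; apply: mulr_ge0; first exact: play_prob_ge0.
have := cost_bound_ge0 (rounds_done h).+1 (update (est_loss (state_of h)) S (c (rounds_done h))).
have := select_cost_ge0 Fam S (c_ge0 (rounds_done h)).
have : (#|opened h|%:R : R) <= #|S|%:R by rewrite ler_nat subset_leq_card.
lra.
Qed.

Lemma history_bound_round_start h : opened h = set0 -> (rounds_done h < T)%N ->
  history_bound h <= cost_bound (rounds_done h) (est_loss (state_of h)).
Proof.
move=> opened0 ht; rewrite /history_bound opened0 frontier_set0 prefix_mass0.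
set t := rounds_done h; set L := est_loss _.
rewrite (eq_bigr (fun S =>
    play_prob L S * (na_round_cost Fam (c t) S + potential S0 (update L S (c t))) +
    play_prob L S * (3 * \sum_(t.+1 <= tau < T) na_round_cost Fam (c tau) S0))); last first.
  by move=> S _; rewrite /branch_bound /cost_bound na_round_costE cards0 subr0; ring.
rewrite big_split /= -mulr_suml sum_play_prob mul1r /cost_bound (big_ltn ht) mulrDr.
have := potential_step (fun S => na_round_cost_ge0 Fam S (c_ge0 t)) (cost_leM t)
  (cost_S0_ge1 t) L.
lra.
Qed.

Lemma exp_cost_unfold f h : (rounds_done h < T)%N ->
  exp_cost strat c T f.+1 h =
  \sum_(a : act n) strat h a *
    match a with
    | inl i => 1 + exp_cost strat c T f (rcons h (a, c (rounds_done h) i))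
    | inr F => \sum_(i in F) c (rounds_done h) i + exp_cost strat c T f (rcons h (a, 0))
    end.
Proof. by move=> ht; rewrite /= leqNgt ht. Qed.

Lemma open_box_le f h (i : 'I_n) : cost_to_go_le f -> seen_correct h ->
  (rounds_done h < T)%N -> (frontier (opened h) <= i)%N ->
  prefix_mass (play_prob (est_loss (state_of h))) (i |: opened h) i.+1 *
    (1 + exp_cost strat c T f (rcons h (inl i, c (rounds_done h) i)))
  <= prefix_mass (branch_bound (rounds_done h) (est_loss (state_of h)) (opened h))
       (i |: opened h) i.+1.
Proof.
move=> IH seen_h ht le_fi.
set t := rounds_done h; set L := est_loss _; set P := opened h; set hi := rcons h _.
have iP : i \notin P := notin_frontier le_fi.
have rounds_hi : rounds_done hi = t by rewrite /hi rounds_done_rcons addn0.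
have opened_hi : opened hi = i |: P by rewrite /hi opened_rcons.
have loss_hi : est_loss (state_of hi) = L by rewrite /hi state_of_rcons.
have seen_hi : seen_correct hi.
  move=> k; rewrite opened_hi rounds_hi /hi state_of_rcons /= ffunE in_setU1.
  by case: eqP => [-> _ //|_ kP]; exact: seen_h.
have := IH hi seen_hi; rewrite rounds_hi => /(_ ht).
rewrite /history_bound rounds_hi loss_hi opened_hi frontier_setU1 // => IHhi.
rewrite mulrDr mulr1; apply: le_trans (lerD (lexx _) IHhi) _.
rewrite /prefix_mass -big_split /=; apply: ler_sum => S _.
rewrite /branch_bound cardsU1 iP /= natrD le_eqVlt; apply/orP; left; apply/eqP; ring.
Qed.

Lemma select_le f h : cost_to_go_le f -> seen_correct h -> (rounds_done h < T)%N ->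
  play_prob (est_loss (state_of h)) (opened h) *
    (\sum_(k in best_feasible Fam (opened h) (seen (state_of h))) c (rounds_done h) k +
     exp_cost strat c T f (rcons h (inr (best_feasible Fam (opened h) (seen (state_of h))), 0)))
  <= branch_bound (rounds_done h) (est_loss (state_of h)) (opened h) (opened h).
Proof.
move=> IH seen_h ht.
set t := rounds_done h; set L := est_loss _; set P := opened h.
set F := best_feasible Fam P _.
rewrite /branch_bound subrr add0r.
have [->|prob_neq0] := eqVneq (play_prob L P) 0; first by rewrite !mul0r.
apply: ler_wpM2l; first exact: play_prob_ge0.
have [feasF F_min] := best_feasibleP (seen (state_of h))
  (admissible_feasible (play_prob_admissible prob_neq0)).
have seen_sum (G : {set 'I_n}) :
    G \subset P -> \sum_(k in G) seen (state_of h) k = \sum_(k in G) c t k.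
  by move=> GP; apply: eq_bigr => k kG; apply: (seen_h k); exact: (subsetP GP).
apply: lerD.
  apply: sum_le_select_cost => // G feasG; rewrite -!seen_sum; first exact: F_min.
  - by case/andP: feasG.
  - by case/andP: feasF.
set hs := rcons h _.
have rounds_hs : rounds_done hs = t.+1 by rewrite /hs rounds_done_rcons addn1.
have opened_hs : opened hs = set0 by rewrite /hs opened_rcons.
have seen_hs : seen_correct hs by move=> k; rewrite opened_hs inE.
have loss_hs : est_loss (state_of hs) = update L P (c t).
  rewrite /hs state_of_rcons /= round_opened_state -/L -/P /update.
  case: (eqVneq P setT) => // PT; congr full_update.
  by apply/ffunP => k; apply: seen_h; rewrite -/P PT inE.
have [lt_tT|le_Tt] := ltnP t.+1 T; last first.
  by rewrite exp_cost_done ?rounds_hs ?cost_bound_ge0.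
have := IH hs seen_hs; rewrite rounds_hs => /(_ lt_tT).
rewrite opened_hs frontier_set0 prefix_mass0 sum_play_prob mul1r => IHhs.
apply: le_trans IHhs _; rewrite -loss_hs -rounds_hs.
by apply: history_bound_round_start => //; rewrite rounds_hs.
Qed.

Lemma cost_to_go_leS f : cost_to_go_le f -> cost_to_go_le f.+1.
Proof.
move=> IH h seen_h ht; rewrite exp_cost_unfold //.
set t := rounds_done h; set L := est_loss _; set P := opened h; set m := prefix_mass _ P _.
have [m_gt0|m_le0] := ltrP 0 m; last first.
  rewrite (_ : m = 0) ?mul0r ?history_bound_ge0 //.
  by apply/eqP; rewrite eq_le m_le0 prefix_mass_ge0.
set bf := best_feasible Fam P (seen (state_of h)).
have strat_scaled a : m * strat h a =
  match a with
  | inl i => if (frontier P <= i)%N then prefix_mass (play_prob L) (i |: P) i.+1 else 0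
  | inr F => if F == bf then play_prob L P else 0
  end.
  rewrite /exp_weights_strategy -/L -/P -/m -/bf m_gt0 /=.
  by case: a => [i|F]; case: ifP; rewrite ?mulr0 // mulrC divfK ?gt_eqF.
rewrite mulr_sumr big_sumType /= /history_bound -/t -/L -/P.
rewrite prefix_mass_unfold ?leqnn ?frontier_le // prefix_mass_n; apply: lerD.
  rewrite [leRHS]big_mkcond; apply: ler_sum => i _; rewrite mulrA strat_scaled /=.
  by case: ifP => [le_fi|_]; [exact: (open_box_le IH seen_h ht le_fi) | rewrite mul0r].
rewrite (bigD1 bf) //= [X in _ + X]big1 ?addr0; last first.
  by move=> F /negbTE F_neq; rewrite mulrA strat_scaled /= F_neq mul0r.
by rewrite mulrA strat_scaled /= eqxx; exact: (select_le IH seen_h ht).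
Qed.

Lemma alg_cost_le_cost_bound : alg_cost strat c T <= cost_bound 0 0.
Proof.
have [T0|T_gt0] := posnP T; first by rewrite /alg_cost exp_cost_done ?T0 ?cost_bound_ge0.
have all_f f : cost_to_go_le f.
  elim: f => [h _ _|f]; last exact: cost_to_go_leS.
  by rewrite /= mulr0 history_bound_ge0.
have seen_nil : seen_correct [::] by move=> i; rewrite /= inE.
have := all_f (T * n.+1) [::] seen_nil T_gt0.
rewrite /= frontier_set0 prefix_mass0 sum_play_prob mul1r => le_bound.
by apply: le_trans le_bound _; apply: history_bound_round_start.
Qed.

End Analysis.
End ExpWeights.

Section NoRegret.
Variables (R : realType) (n : nat) (Fam : {set {set 'I_n}}).

Lemma approx_no_regret_of_additive (s : strategy R n) (B a alpha K : R) :
  0 <= a <= alpha ->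
  (forall (c : nat -> {ffun 'I_n -> R}) T,
     (forall t i, 0 <= c t i <= B) -> alg_cost s c T <= a * OPT Fam c T + K) ->
  approx_no_regret Fam B alpha s.
Proof.
move=> /andP[a_ge0 le_a_alpha] additive eps eps_gt0.
exists (Num.Def.archi_bound (`|K| / eps)).+1 => T le_T c c_bnd.
have OPT_c_ge0 : 0 <= OPT Fam c T by apply: OPT_ge0 => t i; case/andP: (c_bnd t i).
have K_le : `|K| <= eps * T%:R.
  have := archi_boundP (divr_ge0 (normr_ge0 K) (ltW eps_gt0)).
  rewrite ltr_pdivrMr // => /ltW /le_trans; apply.
  by rewrite mulrC ler_pM2l // ler_nat; exact: ltnW.
have T_gt0 : (0 < T)%N by apply: leq_trans le_T.
have := additive c T c_bnd; have := ler_norm K.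
have : a * OPT Fam c T <= alpha * OPT Fam c T by rewrite ler_wpM2r.
rewrite ler_pdivrMr ?ltr0n //; lra.
Qed.

Hypothesis Fam_nonempty : exists F, F \in Fam.
Hypothesis Fam_neq0 : forall F, F \in Fam -> F != set0.

Lemma round_cost_le_bound (c : {ffun 'I_n -> R}) (B : R) S : (forall i, 0 <= c i <= B) ->
  na_round_cost Fam c S <= 1 + n%:R + n%:R * `|B|.
Proof.
move=> c_bnd; rewrite na_round_costE.
have card_le : (#|S|%:R : R) <= n%:R.
  by rewrite ler_nat; apply: leq_trans (max_card _) _; rewrite card_ord.
have sum_le : \sum_(i in S) c i <= n%:R * `|B|.
  apply: le_trans (_ : \sum_(i in S) `|B| <= _).
    by apply: ler_sum => i _; case/andP: (c_bnd i) => _ /le_trans; apply; exact: ler_norm.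
  by rewrite sumr_const -[_ *+ #|S|]mulr_natl ler_wpM2r.
have := select_cost_le_sum Fam c S; lra.
Qed.

Lemma admissible_cost_ge1 (c : {ffun 'I_n -> R}) S : (forall i, 0 <= c i) ->
  S \in admissible Fam -> 1 <= na_round_cost Fam c S.
Proof.
move=> c_ge0; rewrite inE => /existsP[F /andP[FFam FS]].
have : (0 < #|S|)%N by apply: leq_trans (subset_leq_card FS); rewrite card_gt0 Fam_neq0.
rewrite -(ler_nat R) na_round_costE; have := select_cost_ge0 Fam S c_ge0; lra.
Qed.

Lemma exp_weights_cost_le (M : R) (c : nat -> {ffun 'I_n -> R}) T :
  1 <= M -> (forall t i, 0 <= c t i) -> (forall t S, na_round_cost Fam (c t) S <= M) ->
  alg_cost (exp_weights_strategy Fam M) c T <=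
  3 * OPT Fam c T + 2 / learn_rate M * ln (weight_sum Fam M 0).
Proof.
move=> M_ge1 c_ge0 cost_leM.
set A := alg_cost _ c T; set K := 2 / learn_rate M * _.
have bound S : S \in admissible Fam -> A <= 3 * na_total Fam c T S + K.
  move=> SA; have := alg_cost_le_cost_bound M_ge1 Fam_nonempty T c_ge0 cost_leM SA
    (fun t => admissible_cost_ge1 (c_ge0 t) SA).
  by rewrite /cost_bound /potential ffunE mulr0 addr0 /na_total big_mkord.
rewrite /OPT; apply: (big_ind (fun x => A <= 3 * x + K)) => [|x y Ax Ay|S SA].
- by apply: bound; exact: setT_admissible.
- by case: (leP x y).
- by apply: bound; rewrite inE.
Qed.

Lemma approx3_no_regret (B alpha : R) : 3 <= alpha ->
  exists s : strategy R n, valid_strategy Fam s /\ approx_no_regret Fam B alpha s.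
Proof.
move=> alpha_ge3; pose M : R := 1 + n%:R + n%:R * `|B|.
have M_ge1 : 1 <= M by rewrite /M -addrA lerDl addr_ge0 ?mulr_ge0.
exists (exp_weights_strategy Fam M); split; first exact: exp_weights_strategy_valid.
apply: (@approx_no_regret_of_additive _ B 3 alpha (2 / learn_rate M * ln (weight_sum Fam M 0))).
  by rewrite ler0n alpha_ge3.
move=> c T c_bnd; apply: exp_weights_cost_le => // [t i|t S].
  by case/andP: (c_bnd t i).
exact: round_cost_le_bound S (c_bnd t).
Qed.

End NoRegret.

Definition select_empty_strategy (R : realType) n : strategy R n :=
  fun _ a => (a == inr set0)%:R.

Lemma empty_selection_no_regret (R : realType) n (Fam : {set {set 'I_n}}) (B alpha : R) :
  0 <= alpha -> set0 \in Fam ->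
  exists s : strategy R n, valid_strategy Fam s /\ approx_no_regret Fam B alpha s.
Proof.
move=> alpha_ge0 set0_Fam; exists (@select_empty_strategy R n); split.
  move=> h; split; first by move=> a; rewrite ler0n.
  split.
    rewrite /select_empty_strategy (bigD1 (inr set0)) //= eqxx big1 ?addr0 //.
    by move=> a /negbTE ->.
  move=> a; rewrite /select_empty_strategy pnatr_eq0 eqb0 negbK => /eqP -> /=.
  by rewrite set0_Fam sub0set.
have cost0 c T f (h : history R n) : exp_cost (@select_empty_strategy R n) c T f h = 0.
  elim: f h => [//|f IH] h /=; case: ifP => // _.
  rewrite (bigD1 (inr set0)) //= [X in _ + X]big1 ?addr0; last first.
    by move=> a /negbTE a_neq; rewrite /select_empty_strategy a_neq mul0r.
  by rewrite /select_empty_strategy eqxx mul1r IH big_set0 add0r.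
apply: (@approx_no_regret_of_additive _ _ _ _ B 0 alpha 0); first by rewrite lexx alpha_ge0.
by move=> c T c_bnd; rewrite /alg_cost cost0 mul0r addr0.
Qed.

Lemma ksub_fam_nonempty n k : (k <= n)%N -> exists F, F \in ksub_fam n k.
Proof.
move=> le_kn; exists [set widen_ord le_kn i | i : 'I_k].
rewrite inE card_imset ?cardsT ?card_ord //.
by move=> x y /(congr1 val) /= /val_inj.
Qed.

Lemma ksub_fam_neq0 n k : (0 < k)%N -> forall F, F \in ksub_fam n k -> F != set0.
Proof.
move=> k_gt0 F; rewrite inE => /eqP cardF.
by apply: contraTneq k_gt0 => F0; rewrite -cardF F0 cards0.
Qed.

Lemma matroid_bases_cases n (I : {set {set 'I_n}}) k :
  is_matroid I -> matroid_rank I k ->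
  set0 \in bases I \/
  (exists F, F \in bases I) /\ (forall F, F \in bases I -> F != set0).
Proof.
move=> [I0 _ I_exchange] [[B0 B0I cardB0] I_le_k].
have [k0|k_gt0] := posnP k.
  left; rewrite inE /is_basis I0 /=; apply/forallP => x; apply/implyP => _.
  by apply/negP => /I_le_k; rewrite k0 cardsU1 in_set0 cards0.
right; split.
  exists B0; rewrite inE /is_basis B0I /=; apply/forallP => x; apply/implyP => xB0.
  by apply/negP => /I_le_k; rewrite cardsU1 xB0 cardB0 ltnn.
move=> F; rewrite inE => /andP[FI /forallP F_max]; apply/negP => /eqP F0.
have lt_card : (#|F| < #|B0|)%N by rewrite F0 cards0 cardB0.
have [x _ xI] := I_exchange F B0 FI B0I lt_card.
by have := F_max x; rewrite xI F0 in_set0.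
Qed.

Theorem corollary5p5 (R : realType) :
  (* (i) one box: 3.16-approximate no-regret *)
  (forall (n : nat) (B : R), (0 < n)%N ->
     exists s : strategy R n,
       valid_strategy (single_fam n) s /\
       approx_no_regret (single_fam n) B (316%:R / 100%:R) s) /\
  (* (ii) k distinct boxes: 12.64-approximate no-regret *)
  (forall (n k : nat) (B : R), (0 < k <= n)%N ->
     exists s : strategy R n,
       valid_strategy (ksub_fam n k) s /\
       approx_no_regret (ksub_fam n k) B (1264%:R / 100%:R) s) /\
  (* (iii) basis of a rank-k matroid: O(log k)-approximate no-regret *)
  (exists C : R, 0 < C /\
     forall (n k : nat) (I : {set {set 'I_n}}) (B : R),
       is_matroid I -> matroid_rank I k ->
       exists s : strategy R n,
         valid_strategy (bases I) s /\
         approx_no_regret (bases I) B (C * (trunc_log 2 k).+1%:R) s).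
Proof.
split.
  move=> n B n_gt0; apply: approx3_no_regret.
  - exact: (ksub_fam_nonempty (k := 1)).
  - exact: (@ksub_fam_neq0 n 1).
  - by rewrite ler_pdivlMr ?ltr0n // -natrM ler_nat.
split.
  move=> n k B /andP[k_gt0 le_kn]; apply: approx3_no_regret.
  - exact: ksub_fam_nonempty.
  - exact: ksub_fam_neq0 k_gt0.
  - by rewrite ler_pdivlMr ?ltr0n // -natrM ler_nat.
exists 3; split => // n k I B I_matroid I_rank.
have ge3 : 3 <= 3 * (trunc_log 2 k).+1%:R :> R by rewrite -natrM ler_nat leq_pmulr.
have [set0_basis|[bases_nonempty bases_neq0]] := matroid_bases_cases I_matroid I_rank.
  by apply: empty_selection_no_regret => //; apply: le_trans ge3.
by apply: approx3_no_regret.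
Qed.
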